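(* If every geodesic on $\Sigma_\Gamma$ intersects the open ball $B(\pi(x),\rho)$, then $S^+(\ell,\rho,x)$ is aperiodic.
   Context: $\mathbb{D}=\{z\in\mathbb{C}:|z|<1\}$ with hyperbolic metric $d$ induced by $ds=2|dz|/(1-|z|^2)$; geodesics are parametrised with unit speed and the normal bundle of an oriented geodesic is oriented by the standard orientation of $\mathbb{D}$ and that of the geodesic. Standing setting: $\Gamma$ is a cocompact Fuchsian group with fundamental domain $\tau$ a hyperbolic polygon whose side-pairing generators are none of them their own inverse; $\Sigma_\Gamma=\Gamma\backslash\mathbb{D}$ with quotient map $\pi$ and induced metric; $\ell$ is a geodesic in $\mathbb{D}$ with unit-speed parametrisation $\kappa_\ell$ such that the image of $\{(\kappa_\ell(t),\kappa_\ell'(t))\}$ in $\operatorname{ST}(\Sigma_\Gamma)$ is a dense orbit of the geodesic flow; $x\in\tau^\circ$ and $\rho>0$. For a geodesic $k$ with unit-speed parametrisation $\kappa$: $\overline{\mathcal{N}(k,\rho)}^+$ is the union of $\{y:d(y,k)<\rho\}$ with the component of its boundary on the positive side of $k$; $p_k$ is orthogonal projection onto $k$; $S^+(k,\rho,x)=\kappa^{-1}(p_k(\Gamma(x)\cap\overline{\mathcal{N}(k,\rho)}^+))\subseteq\mathbb{R}$. A set $S\subseteq\mathbb{R}$ is aperiodic if $S-v\neq S$ for every $v\in\mathbb{R}\setminus\{0\}$. *)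

From Stdlib Require Import Reals Lra List.
From Coquelicot Require Import Coquelicot.
Open Scope R_scope.

Definition inD (z : C) : Prop := Cmod z < 1.

(** Hyperbolic distance on D induced by ds = 2|dz|/(1-|z|^2):
    cosh d(z,w) = 1 + 2|z-w|^2 / ((1-|z|^2)(1-|w|^2)). *)
Definition arcosh (u : R) : R := ln (u + sqrt (u * u - 1)).
Definition hdist (z w : C) : R :=
  arcosh (1 + 2 * (Cmod (z - w)%C) ^ 2 / ((1 - (Cmod z) ^ 2) * (1 - (Cmod w) ^ 2))).

(** Orientation-preserving isometries of D: z |-> (a z + b)/(conj b z + conj a),
    |a|^2 - |b|^2 = 1  (elements of PSU(1,1)). *)
Definition mob (a b : C) (z : C) : C := ((a * z + b) / (Cconj b * z + Cconj a))%C.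
Definition su11 (a b : C) : Prop := (Cmod a) ^ 2 - (Cmod b) ^ 2 = 1.
Definition isMob (f : C -> C) : Prop :=
  exists a b, su11 a b /\ forall z, inD z -> f z = mob a b z.

Definition isGeodesic (c : R -> C) : Prop :=
  (forall t, inD (c t)) /\ forall s t, hdist (c s) (c t) = Rabs (s - t).

(** Unit-speed parametrisation of the real diameter, oriented towards +1:
    t |-> tanh (t/2). *)
Definition diam (t : R) : C := RtoC ((exp t - 1) / (exp t + 1)).

(** The standard model: the real
    diameter oriented towards +1 has unit tangent 1, positive normal i, hence
    positive side {Im z > 0}; every oriented geodesic is the image of this one
    under an orientation-preserving isometry g, and the positive side of c is
    g({Im > 0}) (independent of the choice of g). *)
Definition posSide (c : R -> C) (y : C) : Prop :=
  inD y /\ exists a b, su11 a b /\ (forall t, c t = mob a b (diam t)) /\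
    0 < Im (mob (Cconj a) (- b)%C y).

Definition closedHP (c : R -> C) (y : C) : Prop :=
  inD y /\ ((exists t, y = c t) \/ posSide c y).

Definition Nplus (c : R -> C) (rho : R) (y : C) : Prop :=
  inD y /\
  ((exists t, hdist y (c t) < rho) \/
   (posSide c y /\ (forall t, rho <= hdist y (c t)) /\ exists t, hdist y (c t) = rho)).

(** S^+(k, rho, x) = kappa^{-1}(p_k(Gamma(x) ∩ Nbar^+(k,rho))):
    t such that kappa t is the orthogonal projection (closest point on k)
    of some g x in Nbar^+. *)
Definition Splus (Gamma : (C -> C) -> Prop) (kappa : R -> C) (rho : R) (x : C)
  (t : R) : Prop :=
  exists g, Gamma g /\ Nplus kappa rho (g x) /\
    forall s, hdist (g x) (kappa t) <= hdist (g x) (kappa s).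

(** S is aperiodic: S - v <> S for all v <> 0  (u ∈ S - v  iff  u + v ∈ S). *)
Definition aperiodic (S : R -> Prop) : Prop :=
  forall v, v <> 0 -> ~ (forall u, S (u + v) <-> S u).

(** Gamma is a Fuchsian group: a subgroup of the orientation-preserving
    isometries of D (elements compared as maps on D) acting properly
    discontinuously (equivalently, discrete). *)
Definition fuchsian (Gamma : (C -> C) -> Prop) : Prop :=
  (forall g, Gamma g -> isMob g) /\
  (exists e, Gamma e /\ forall z, inD z -> e z = z) /\
  (forall f g, Gamma f -> Gamma g ->
     exists h, Gamma h /\ forall z, inD z -> h z = f (g z)) /\
  (forall f, Gamma f -> exists h, Gamma h /\ forall z, inD z -> h (f z) = z) /\
  (forall r, 0 <= r < 1 ->
     exists l : list (C -> C), forall g, Gamma g ->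
       (exists z, Cmod z <= r /\ Cmod (g z) <= r) ->
       exists h, In h l /\ forall z, inD z -> h z = g z).

Definition cocompact (Gamma : (C -> C) -> Prop) : Prop :=
  exists r, r < 1 /\ forall z, inD z -> exists g, Gamma g /\ Cmod (g z) <= r.

Definition interiorD (A : C -> Prop) (z : C) : Prop :=
  exists eps, 0 < eps /\ forall y, Cmod (y - z)%C < eps -> A y.

Definition hyperbolic_polygon (tau : C -> Prop) : Prop :=
  exists cs : list (R -> C),
    (forall c, In c cs -> isGeodesic c) /\
    (forall y, tau y <-> inD y /\ forall c, In c cs -> closedHP c y) /\
    (exists r, r < 1 /\ forall y, tau y -> Cmod y <= r) /\
    (exists z, interiorD tau z).

Definition is_side (tau : C -> Prop) (s : C -> Prop) : Prop :=
  exists c, isGeodesic c /\ (forall y, tau y -> closedHP c y) /\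
    (forall y, s y <-> tau y /\ exists t, y = c t) /\
    (exists y1 y2, s y1 /\ s y2 /\ y1 <> y2).

Definition fundamental_domain (Gamma : (C -> C) -> Prop) (tau : C -> Prop) : Prop :=
  (forall y, tau y -> inD y) /\
  (forall z, inD z -> exists g, Gamma g /\ tau (g z)) /\
  (forall g, Gamma g -> (exists z, inD z /\ g z <> z) ->
     ~ exists z, interiorD tau z /\ interiorD tau (g z)).

Definition img (g : C -> C) (tau : C -> Prop) (y : C) : Prop :=
  exists z, tau z /\ y = g z.

Definition side_pairings_not_involutions (Gamma : (C -> C) -> Prop)
  (tau : C -> Prop) : Prop :=
  forall g, Gamma g -> is_side tau (fun y => tau y /\ img g tau y) ->
    exists z, inD z /\ g (g z) <> z.

(** The image of t |-> (kappa t, kappa' t) in ST(Sigma_Gamma) is dense.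
    A unit tangent vector of D is identified with the unit-speed geodesic it
    generates, the geodesic-flow orbit point at time t with s |-> kappa (t+s),
    and the topology of ST(D) with uniform closeness of geodesics on [-1,1]. *)
Definition dense_orbit (Gamma : (C -> C) -> Prop) (kappa : R -> C) : Prop :=
  forall c, isGeodesic c -> forall eps, 0 < eps ->
    exists t g, Gamma g /\
      forall s, -1 <= s <= 1 -> hdist (g (kappa (t + s))) (c s) < eps.

Definition every_geodesic_meets_ball (Gamma : (C -> C) -> Prop) (x : C) (rho : R) : Prop :=
  forall c, isGeodesic c -> exists t g, Gamma g /\ hdist (c t) (g x) < rho.

(* Suppose S^+ were invariant under translation by v <> 0.  By discreteness only finitely many
   orbit points of x lie within a fixed distance of x.  Through x choose a geodesic c such that,
   for each of them, the profile s |-> d(y, c s) = arcosh (A cosh (s - p)) is not centred at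
   p = v: being centred at v is a nonzero quadratic condition on the direction of c.  Then every
   point of c near v is beaten by a point of c([v-1, v+1]), by a uniform margin, as the foot of
   such a y.  By density some translate g l of l shadows c on [v-1, v+1]; the orbit point near
   g l(0) = x has a foot p in S^+, hence p + v is in S^+, and its witness is carried by g to an
   orbit point near x whose foot on g l lies near v, contradicting the margin. *)

From Stdlib Require Import Reals Lra List Classical.
From Coquelicot Require Import Coquelicot.
Open Scope R_scope.

(** * Hyperbolic functions *)

Lemma cosh_ge1 x : 1 <= cosh x.
Proof.
  unfold cosh. rewrite exp_Ropp. pose proof (exp_pos x) as Hx.
  assert (E : (exp x + / exp x) / 2 - 1 = (exp x - 1) ^ 2 / (2 * exp x)) by (field; lra).
  assert (0 <= (exp x - 1) ^ 2 / (2 * exp x)) by (apply Rdiv_le_0_compat; [apply pow2_ge_0 | lra]).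
  lra.
Qed.

Lemma cosh_pos x : 0 < cosh x.
Proof. pose proof (cosh_ge1 x); lra. Qed.

Lemma cosh_sinh_sqr x : cosh x ^ 2 - sinh x ^ 2 = 1.
Proof. unfold cosh, sinh. rewrite exp_Ropp. pose proof (exp_pos x). field. lra. Qed.

Lemma cosh_neg x : cosh (- x) = cosh x.
Proof. unfold cosh. rewrite Ropp_involutive. field. Qed.

Lemma sinh_neg x : sinh (- x) = - sinh x.
Proof. unfold sinh. rewrite Ropp_involutive. field. Qed.

Lemma cosh_minus x y : cosh (x - y) = cosh x * cosh y - sinh x * sinh y.
Proof.
  unfold cosh, sinh, Rminus. rewrite Ropp_plus_distr, Ropp_involutive, !exp_plus, !exp_Ropp.
  pose proof (exp_pos x). pose proof (exp_pos y). field. lra.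
Qed.

Lemma cosh_plus x y : cosh (x + y) = cosh x * cosh y + sinh x * sinh y.
Proof. replace (x + y) with (x - - y) by ring. rewrite cosh_minus, cosh_neg, sinh_neg. ring. Qed.

Lemma cosh_Rabs x : cosh (Rabs x) = cosh x.
Proof. unfold Rabs; destruct (Rcase_abs x); [apply cosh_neg | reflexivity]. Qed.

Lemma sinh_ge0 x : 0 <= x -> 0 <= sinh x.
Proof.
  intro Hx. destruct (Req_dec x 0) as [->|]; [rewrite sinh_0; lra|].
  pose proof (sinh_lt 0 x ltac:(lra)). rewrite sinh_0 in *. lra.
Qed.

Lemma sinh1_pos : 0 < sinh 1.
Proof. pose proof (sinh_lt 0 1 ltac:(lra)). rewrite sinh_0 in *. lra. Qed.

Lemma sinh_neq0 v : v <> 0 -> sinh v <> 0.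
Proof.
  intros Hv. rewrite <- sinh_0. destruct (Rlt_le_dec v 0).
  - pose proof (sinh_lt v 0 r). lra.
  - pose proof (sinh_lt 0 v ltac:(lra)). lra.
Qed.

Lemma Rabs_sinh_le_cosh x : Rabs (sinh x) <= cosh x.
Proof.
  pose proof (cosh_sinh_sqr x). pose proof (cosh_pos x).
  apply Rsqr_incr_0_var; [rewrite <- Rsqr_abs; unfold Rsqr; nra | lra].
Qed.

Lemma cosh_lt_nonneg a b : 0 <= a -> a < b -> cosh a < cosh b.
Proof.
  intros Ha Hab. unfold cosh. rewrite !exp_Ropp.
  pose proof (exp_increasing a b Hab).
  assert (1 <= exp a).
  { rewrite <- exp_0. destruct Ha as [Ha|<-]; [left; apply exp_increasing, Ha | lra]. }
  assert (1 < exp a * exp b) by nra.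
  assert (/ exp a - / exp b = (exp b - exp a) / (exp a * exp b)) by (field; lra).
  assert ((exp b - exp a) / (exp a * exp b) < exp b - exp a).
  { apply Rmult_lt_reg_r with (exp a * exp b); [lra|].
    unfold Rdiv. rewrite Rmult_assoc, Rinv_l by lra. nra. }
  lra.
Qed.

Lemma cosh_lt_Rabs a b : Rabs a < Rabs b -> cosh a < cosh b.
Proof.
  intro H. rewrite <- (cosh_Rabs a), <- (cosh_Rabs b). apply cosh_lt_nonneg; [apply Rabs_pos | lra].
Qed.

Lemma cosh_le_Rabs a b : Rabs a <= Rabs b -> cosh a <= cosh b.
Proof.
  intros [H|H]; [left; apply cosh_lt_Rabs; lra|].
  rewrite <- (cosh_Rabs a), <- (cosh_Rabs b), H. lra.
Qed.

Lemma arcosh_cosh t : arcosh (cosh t) = Rabs t.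
Proof.
  unfold arcosh.
  assert (cosh t * cosh t - 1 = Rsqr (sinh t)) by (pose proof (cosh_sinh_sqr t); unfold Rsqr; nra).
  rewrite H, sqrt_Rsqr_abs.
  unfold Rabs at 1 2; destruct (Rcase_abs (sinh t)), (Rcase_abs t).
  - replace (cosh t + - sinh t) with (exp (- t)) by (unfold cosh, sinh; field). apply ln_exp.
  - pose proof (sinh_ge0 t ltac:(lra)); lra.
  - pose proof (sinh_lt t 0 r0). rewrite sinh_0 in *. lra.
  - replace (cosh t + sinh t) with (exp t) by (unfold cosh, sinh; field). apply ln_exp.
Qed.

Lemma cosh_arcosh u : 1 <= u -> cosh (arcosh u) = u.
Proof.
  intro H. unfold cosh, arcosh. rewrite exp_Ropp.
  assert (Hs : sqrt (u * u - 1) * sqrt (u * u - 1) = u * u - 1) by (apply sqrt_sqrt; nra).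
  pose proof (sqrt_pos (u * u - 1)).
  rewrite exp_ln by lra.
  assert (/ (u + sqrt (u * u - 1)) = u - sqrt (u * u - 1)) by (field_simplify_eq; nra).
  rewrite H1. field.
Qed.

Lemma arcosh_ge0 u : 1 <= u -> 0 <= arcosh u.
Proof.
  intro H. rewrite <- (cosh_arcosh u H), arcosh_cosh. apply Rabs_pos.
Qed.

Lemma arcosh_le_iff u t : 1 <= u -> 0 <= t -> (arcosh u <= t <-> u <= cosh t).
Proof.
  intros Hu Ht. rewrite <- (cosh_arcosh u Hu) at 2. pose proof (arcosh_ge0 u Hu).
  split; intro H'.
  - apply cosh_le_Rabs. rewrite !Rabs_pos_eq; lra.
  - destruct (Rle_lt_dec (arcosh u) t) as [|Hlt]; auto.
    pose proof (cosh_lt_nonneg t (arcosh u) Ht Hlt). lra.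
Qed.

Lemma arcosh_le u w : 1 <= u -> u <= w -> arcosh u <= arcosh w.
Proof.
  intros Hu Huw. apply arcosh_le_iff; auto. apply arcosh_ge0. lra.
  rewrite cosh_arcosh; lra.
Qed.

Lemma arcosh_lt u w : 1 <= u -> u < w -> arcosh u < arcosh w.
Proof.
  intros Hu Huw. destruct (Rlt_le_dec (arcosh u) (arcosh w)) as [|H]; auto.
  apply arcosh_le_iff in H; [rewrite cosh_arcosh in H; lra | lra | apply arcosh_ge0; lra].
Qed.

(** * The disk and hyperboloid models *)

Definition Cnorm2 (z : C) : R := fst z ^ 2 + snd z ^ 2.

Lemma Cnorm2_ge0 z : 0 <= Cnorm2 z.
Proof. unfold Cnorm2. pose proof (pow2_ge_0 (fst z)); pose proof (pow2_ge_0 (snd z)); lra. Qed.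

Lemma Cmod_sqr z : Cmod z ^ 2 = Cnorm2 z.
Proof. apply Cmod2_alt. Qed.

Lemma inD_Cnorm2 z : inD z <-> Cnorm2 z < 1.
Proof.
  unfold inD. rewrite <- Cmod_sqr. pose proof (Cmod_ge_0 z). simpl. split; intro H'; [nra|].
  destruct (Rlt_le_dec (Cmod z) 1); auto. nra.
Qed.

Lemma Cnorm2_sub_sym z w : Cnorm2 (z - w)%C = Cnorm2 (w - z)%C.
Proof. destruct z, w. unfold Cnorm2; simpl. ring. Qed.

Lemma Cnorm2_RtoC r : Cnorm2 (RtoC r) = r ^ 2.
Proof. unfold Cnorm2; simpl. ring. Qed.

Lemma Cnorm2_mul p q : Cnorm2 (p * q)%C = Cnorm2 p * Cnorm2 q.
Proof. destruct p, q; unfold Cnorm2; simpl. ring. Qed.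

Lemma Cnorm2_div p q : Cnorm2 q <> 0 -> Cnorm2 (p / q)%C = Cnorm2 p / Cnorm2 q.
Proof.
  destruct p as [p1 p2], q as [q1 q2]; unfold Cnorm2; simpl. intro H.
  assert (q1 * q1 + q2 * q2 <> 0) by (intro E; apply H; lra).
  unfold Cdiv, Cinv, Cmult; simpl. field. auto.
Qed.

(** [chdist z w] is [cosh (hdist z w)]. *)
Definition chdist (z w : C) : R :=
  1 + 2 * Cnorm2 (z - w)%C / ((1 - Cnorm2 z) * (1 - Cnorm2 w)).

Lemma hdist_chdist z w : hdist z w = arcosh (chdist z w).
Proof. unfold hdist, chdist. rewrite !Cmod_sqr. reflexivity. Qed.

Lemma chdist_ge1 z w : inD z -> inD w -> 1 <= chdist z w.
Proof.
  rewrite !inD_Cnorm2. intros Hz Hw. unfold chdist. pose proof (Cnorm2_ge0 (z - w)%C).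
  assert (0 <= 2 * Cnorm2 (z - w)%C / ((1 - Cnorm2 z) * (1 - Cnorm2 w)))
    by (apply Rdiv_le_0_compat; [lra | apply Rmult_lt_0_compat; lra]).
  lra.
Qed.

Lemma chdist_sym z w : chdist z w = chdist w z.
Proof. unfold chdist. rewrite Cnorm2_sub_sym, (Rmult_comm (1 - Cnorm2 z)). reflexivity. Qed.

Lemma hdist_sym z w : hdist z w = hdist w z.
Proof. rewrite !hdist_chdist, chdist_sym. reflexivity. Qed.

Lemma hdist_ge0 z w : inD z -> inD w -> 0 <= hdist z w.
Proof. intros. rewrite hdist_chdist. apply arcosh_ge0, chdist_ge1; auto. Qed.

Lemma cosh_hdist z w : inD z -> inD w -> cosh (hdist z w) = chdist z w.
Proof. intros. rewrite hdist_chdist. apply cosh_arcosh, chdist_ge1; auto. Qed.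

Lemma hdist_le_iff z w d : inD z -> inD w -> 0 <= d ->
  (hdist z w <= d <-> chdist z w <= cosh d).
Proof. intros. rewrite hdist_chdist. apply arcosh_le_iff; auto. apply chdist_ge1; auto. Qed.

(** The hyperboloid model: [hyp] maps D isometrically onto the upper sheet of
    [mink X X = 1], where [mink] is the Minkowski form of signature (1,2). *)
Record V3 := mk3 { x0 : R; x1 : R; x2 : R }.

Definition mink (a b : V3) : R := x0 a * x0 b - x1 a * x1 b - x2 a * x2 b.

Definition vlin (a : R) (A : V3) (b : R) (B : V3) : V3 :=
  mk3 (a * x0 A + b * x0 B) (a * x1 A + b * x1 B) (a * x2 A + b * x2 B).

Definition hyp (z : C) : V3 :=
  mk3 ((1 + Cnorm2 z) / (1 - Cnorm2 z)) (2 * fst z / (1 - Cnorm2 z)) (2 * snd z / (1 - Cnorm2 z)).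

Lemma mink_sym A B : mink A B = mink B A.
Proof. unfold mink; ring. Qed.

Lemma mink_vlin Y a A b B : mink Y (vlin a A b B) = a * mink Y A + b * mink Y B.
Proof. unfold mink, vlin; simpl; ring. Qed.

Lemma mink_vlin_l Y a A b B : mink (vlin a A b B) Y = a * mink A Y + b * mink B Y.
Proof. unfold mink, vlin; simpl; ring. Qed.

Lemma chdist_mink z w : inD z -> inD w -> chdist z w = mink (hyp z) (hyp w).
Proof.
  rewrite !inD_Cnorm2. destruct z as [z1 z2], w as [w1 w2].
  unfold chdist, mink, hyp, Cnorm2; simpl. intros. field. lra.
Qed.

Lemma mink_hyp_self z : inD z -> mink (hyp z) (hyp z) = 1.
Proof.
  rewrite inD_Cnorm2. destruct z as [z1 z2]. unfold mink, hyp, Cnorm2; simpl. intros. field. lra.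
Qed.

Lemma hyp_future z : inD z -> 0 < x0 (hyp z).
Proof.
  rewrite inD_Cnorm2. intros. unfold hyp; simpl. pose proof (Cnorm2_ge0 z).
  apply Rdiv_lt_0_compat; lra.
Qed.

Section Orthogonal_complement.

Variable W : V3.
Hypothesis W_unit : mink W W = 1.
Hypothesis W_future : 0 < x0 W.

(* Cauchy-Schwarz on the spatial part of [E], applied to [e0 w0 = e1 w1 + e2 w2]. *)
Lemma mink_orth_sqr_bound E : mink E W = 0 ->
  x0 E ^ 2 * x0 W ^ 2 <= (x1 E ^ 2 + x2 E ^ 2) * (x0 W ^ 2 - 1).
Proof.
  revert W_unit. destruct W as [w0 w1 w2], E as [e0 e1 e2]. unfold mink; cbn [x0 x1 x2]. intros H1 H2.
  replace (e0 ^ 2 * w0 ^ 2) with ((e0 * w0) ^ 2) by ring.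
  replace (e0 * w0) with (e1 * w1 + e2 * w2) by lra.
  replace (w0 ^ 2 - 1) with (w1 ^ 2 + w2 ^ 2) by lra.
  assert ((e1 ^ 2 + e2 ^ 2) * (w1 ^ 2 + w2 ^ 2) - (e1 * w1 + e2 * w2) ^ 2 = (e1 * w2 - e2 * w1) ^ 2)
    by ring.
  pose proof (pow2_ge_0 (e1 * w2 - e2 * w1)). lra.
Qed.

Lemma mink_orth_nonpos E : mink E W = 0 -> mink E E <= 0.
Proof.
  intro HE. pose proof (mink_orth_sqr_bound E HE) as B. revert B W_future.
  destruct W as [w0 w1 w2], E as [e0 e1 e2]. unfold mink; cbn [x0 x1 x2]. intros B Hw.
  pose proof (pow2_ge_0 e1). pose proof (pow2_ge_0 e2).
  assert (e0 ^ 2 * w0 ^ 2 <= (e1 ^ 2 + e2 ^ 2) * w0 ^ 2) by nra.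
  assert (e0 ^ 2 <= e1 ^ 2 + e2 ^ 2) by (apply Rmult_le_reg_r with (w0 ^ 2); nra).
  nra.
Qed.

Lemma mink_orth_null E : mink E W = 0 -> mink E E = 0 -> x0 E = 0 /\ x1 E = 0 /\ x2 E = 0.
Proof.
  intros HE HEE. pose proof (mink_orth_sqr_bound E HE) as B. revert B HEE W_future.
  destruct W as [w0 w1 w2], E as [e0 e1 e2]. unfold mink; cbn [x0 x1 x2]. intros B HEE Hw.
  replace (e1 ^ 2 + e2 ^ 2) with (e0 ^ 2) in B by nra.
  assert (e0 = 0) by nra. subst.
  pose proof (pow2_ge_0 e1); pose proof (pow2_ge_0 e2). repeat split; nra.
Qed.

End Orthogonal_complement.

Lemma discriminant_le a b c : (forall l, a + 2 * l * b + l ^ 2 * c <= 0) -> b ^ 2 <= a * c.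
Proof.
  intro H.
  assert (Hc : c <= 0).
  { destruct (Rle_lt_dec c 0) as [|Hc]; auto. exfalso.
    set (l := (Rabs a + 1) / c + 1).
    assert (Hlc : l * c = Rabs a + 1 + c) by (unfold l; field; lra).
    assert (1 <= l) by (unfold l; pose proof (Rabs_pos a);
      assert (0 <= (Rabs a + 1) / c) by (apply Rdiv_le_0_compat; lra); lra).
    assert (Hl2 : l ^ 2 * c = l * (Rabs a + 1 + c)) by (rewrite <- Hlc; ring).
    assert (l * (Rabs a + 1 + c) >= Rabs a + 1 + c) by (pose proof (Rabs_pos a); nra).
    pose proof (H l) as Hl. pose proof (H (- l)) as Hl'.
    pose proof (Rle_abs (- a)) as Ha. rewrite Rabs_Ropp in Ha. nra. }
  destruct Hc as [Hc | ->].
  - pose proof (H (- b / c)) as Hl.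
    replace (a + 2 * (- b / c) * b + (- b / c) ^ 2 * c) with (a - b ^ 2 / c) in Hl by (field; lra).
    assert (b ^ 2 / c * c = b ^ 2) by (field; lra). nra.
  - destruct (Req_dec b 0) as [->|Hb]; [pose proof (H 0); nra|].
    pose proof (H ((1 - a) / (2 * b))) as Hl.
    replace (a + 2 * ((1 - a) / (2 * b)) * b + ((1 - a) / (2 * b)) ^ 2 * 0) with 1 in Hl
      by (field; auto).
    lra.
Qed.

(* Reverse Cauchy-Schwarz on the [mink]-orthogonal complement of [W]: project [Z] and [U] to
   [W]-orthogonal vectors, on which [mink] is negative semidefinite. *)
Lemma mink_triangle Z W U : mink Z Z = 1 -> mink W W = 1 -> mink U U = 1 -> 0 < x0 W ->
  mink Z U <= mink Z W * mink U W + sqrt ((mink Z W ^ 2 - 1) * (mink U W ^ 2 - 1)).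
Proof.
  intros HZ HW HU HW0.
  set (a := mink Z W). set (b := mink U W). set (c := mink Z U).
  assert (Hq : forall l, (1 - a ^ 2) + 2 * l * (c - a * b) + l ^ 2 * (1 - b ^ 2) <= 0).
  { intro l.
    set (E := vlin 1 (vlin 1 Z (- a) W) l (vlin 1 U (- b) W)).
    assert (HEW : mink E W = 0).
    { unfold E. rewrite !mink_vlin_l, HW. fold a b. ring. }
    pose proof (mink_orth_nonpos W HW HW0 E HEW) as HEE.
    replace (mink E E) with ((1 - a ^ 2) + 2 * l * (c - a * b) + l ^ 2 * (1 - b ^ 2)) in HEE; auto.
    unfold E. rewrite !mink_vlin_l, !mink_vlin.
    rewrite (mink_sym W Z), (mink_sym W U), (mink_sym U Z), HZ, HW, HU. fold a b c. ring. }
  apply discriminant_le in Hq.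
  assert (c - a * b <= sqrt ((a ^ 2 - 1) * (b ^ 2 - 1))).
  { apply Rle_trans with (Rabs (c - a * b)); [apply Rle_abs|].
    rewrite <- sqrt_Rsqr_abs. apply sqrt_le_1_alt. unfold Rsqr. nra. }
  lra.
Qed.

Lemma hdist_triangle z w u : inD z -> inD w -> inD u -> hdist z u <= hdist z w + hdist w u.
Proof.
  intros Hz Hw Hu.
  pose proof (hdist_ge0 z w Hz Hw). pose proof (hdist_ge0 w u Hw Hu).
  pose proof (cosh_hdist z w Hz Hw) as Ea. pose proof (cosh_hdist w u Hw Hu) as Eb.
  set (al := hdist z w) in *. set (be := hdist w u) in *.
  apply hdist_le_iff; auto; [lra|].
  pose proof (mink_triangle (hyp z) (hyp w) (hyp u) (mink_hyp_self z Hz) (mink_hyp_self w Hw)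
    (mink_hyp_self u Hu) (hyp_future w Hw)) as T.
  rewrite <- !chdist_mink, (chdist_sym u w), <- Ea, <- Eb in T by auto.
  replace ((cosh al ^ 2 - 1) * (cosh be ^ 2 - 1)) with ((sinh al * sinh be) ^ 2) in T
    by (pose proof (cosh_sinh_sqr al); pose proof (cosh_sinh_sqr be); nra).
  rewrite sqrt_pow2, cosh_plus in *; [lra|].
  apply Rmult_le_pos; apply sinh_ge0; auto.
Qed.

(** * Geodesics and feet *)

Lemma V3_eq A B : x0 A = x0 B -> x1 A = x1 B -> x2 A = x2 B -> A = B.
Proof. destruct A, B; simpl; intros; subst; reflexivity. Qed.

Lemma geodesic_inD c s : isGeodesic c -> inD (c s).
Proof. intros [H _]. apply H. Qed.

Lemma geodesic_chdist c s t : isGeodesic c -> chdist (c s) (c t) = cosh (s - t).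
Proof.
  intros Hc. rewrite <- cosh_hdist by (apply geodesic_inD; auto).
  rewrite (proj2 Hc). apply cosh_Rabs.
Qed.

Lemma geodesic_mink c s t : isGeodesic c -> mink (hyp (c s)) (hyp (c t)) = cosh (s - t).
Proof. intros Hc. rewrite <- chdist_mink by (apply geodesic_inD; auto). apply geodesic_chdist, Hc. Qed.

(* [Q] is the unit tangent at [c 0], recovered from [c 1]; the difference between [hyp (c s)] and
   the candidate is [mink]-orthogonal to [hyp (c 0)] and null, hence zero. *)
Lemma geodesic_frame c : isGeodesic c ->
  exists P Q, forall s, hyp (c s) = vlin (cosh s) P (sinh s) Q.
Proof.
  intros Hc.
  set (X := fun s => hyp (c s)).
  assert (HB : forall s t, mink (X s) (X t) = cosh (s - t)) by (intros; apply geodesic_mink, Hc).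
  set (P := X 0). set (Q := vlin (- cosh 1 / sinh 1) P (/ sinh 1) (X 1)).
  exists P, Q. intro s.
  pose proof sinh1_pos. pose proof (cosh_sinh_sqr 1). pose proof (cosh_sinh_sqr s).
  assert (HsX1 : cosh (s - 1) = cosh s * cosh 1 - sinh s * sinh 1) by apply cosh_minus.
  set (E := vlin 1 (X s) (-1) (vlin (cosh s) P (sinh s) Q)).
  assert (HEP : mink E P = 0).
  { unfold E, Q, P. rewrite !mink_vlin_l, !HB, !Rminus_0_r, cosh_0. field; intro; lra. }
  assert (HEE : mink E E = 0).
  { unfold E, Q, P. rewrite !mink_vlin_l, !mink_vlin, !HB, !Rminus_0_r, ?Rminus_diag, cosh_0.
    rewrite (cosh_minus 0 s), (cosh_minus 1 s), HsX1, cosh_0, sinh_0.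
    rewrite (cosh_minus 0 1), cosh_0, sinh_0.
    field_simplify; [| intro; lra].
    replace (cosh s ^ 2) with (1 + sinh s ^ 2) by lra.
    replace (cosh 1 ^ 2) with (1 + sinh 1 ^ 2) by lra. field. intro; lra. }
  assert (HPP : mink P P = 1) by (unfold P; rewrite HB, Rminus_diag; apply cosh_0).
  assert (HP0 : 0 < x0 P) by (apply hyp_future, geodesic_inD, Hc).
  destruct (mink_orth_null P HPP HP0 E HEP HEE) as [e0 [e1 e2]].
  unfold E, vlin in e0, e1, e2; cbn [x0 x1 x2] in e0, e1, e2.
  apply V3_eq; unfold vlin; cbn [x0 x1 x2]; fold (X s); lra.
Qed.

Lemma exp_comb_pos p m : (forall s, 1 <= p * exp s + m * exp (- s)) -> 0 < p.
Proof.
  intro H. destruct (Rlt_le_dec 0 p) as [|Hp]; auto. exfalso.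
  pose proof (Rabs_pos m). pose proof (Rle_abs m).
  pose proof (H (ln (Rabs m + 1))) as Hs. rewrite exp_Ropp, exp_ln in Hs by lra.
  assert (m * / (Rabs m + 1) < 1).
  { apply Rmult_lt_reg_r with (Rabs m + 1); [lra|]. rewrite Rmult_assoc, Rinv_l by lra. lra. }
  assert (p * (Rabs m + 1) <= 0) by nra.
  lra.
Qed.

Lemma cosh_sinh_comb_shift al be : (forall s, 1 <= al * cosh s + be * sinh s) ->
  exists A p, 1 <= A /\ forall s, al * cosh s + be * sinh s = A * cosh (s - p).
Proof.
  intro H. set (P := (al + be) / 2). set (M := (al - be) / 2).
  assert (Hform : forall s, al * cosh s + be * sinh s = P * exp s + M * exp (- s))
    by (intro; unfold cosh, sinh, P, M; field).
  assert (HP : 0 < P) by (apply exp_comb_pos with M; intro s; rewrite <- Hform; apply H).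
  assert (HM : 0 < M).
  { apply exp_comb_pos with P. intro s.
    pose proof (H (- s)) as Hs. rewrite Hform, Ropp_involutive in Hs. lra. }
  set (p := (ln M - ln P) / 2). set (A := 2 * exp ((ln P + ln M) / 2)).
  assert (Hf : forall s, al * cosh s + be * sinh s = A * cosh (s - p)).
  { intro s. rewrite Hform. unfold A, cosh. field_simplify. rewrite <- !exp_plus.
    replace ((ln P + ln M) / 2 + (s - p)) with (ln P + s) by (unfold p; field).
    replace ((ln P + ln M) / 2 + - (s - p)) with (ln M + - s) by (unfold p; field).
    rewrite !exp_plus, !exp_ln by lra. ring. }
  exists A, p. split; auto.
  pose proof (H p) as Hp. rewrite Hf, Rminus_diag, cosh_0 in Hp. lra.
Qed.

Definition profile_centered (c : R -> C) (y : C) (p : R) : Prop :=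
  exists A, 1 <= A /\ forall s, chdist y (c s) = A * cosh (s - p).

Definition is_foot (c : R -> C) (y : C) (p : R) : Prop :=
  forall s, hdist y (c p) <= hdist y (c s).

Lemma geodesic_profile c y : isGeodesic c -> inD y -> exists p, profile_centered c y p.
Proof.
  intros Hc Hy. destruct (geodesic_frame c Hc) as [P [Q HPQ]].
  assert (Hs : forall s, chdist y (c s) = mink (hyp y) P * cosh s + mink (hyp y) Q * sinh s).
  { intro s. rewrite chdist_mink, HPQ, mink_vlin by (auto; apply geodesic_inD, Hc). ring. }
  destruct (cosh_sinh_comb_shift (mink (hyp y) P) (mink (hyp y) Q)) as [A [p [HA Hp]]].
  { intro s. rewrite <- Hs. apply chdist_ge1; auto. apply geodesic_inD, Hc. }
  exists p, A. split; auto. intro s. rewrite Hs. apply Hp.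
Qed.

Lemma profile_centered_foot c y p : profile_centered c y p -> is_foot c y p.
Proof.
  intros [A [HA Hp]] s. rewrite !hdist_chdist, !Hp, Rminus_diag, cosh_0.
  apply arcosh_le; [lra|]. pose proof (cosh_ge1 (s - p)). nra.
Qed.

Lemma profile_centered_near c y p t : isGeodesic c -> inD y -> profile_centered c y p ->
  Rabs (t - p) <= hdist y (c t).
Proof.
  intros Hc Hy [A [HA Hp]]. rewrite hdist_chdist, Hp, <- arcosh_cosh.
  pose proof (cosh_ge1 (t - p)). apply arcosh_le; nra.
Qed.

Definition growth_const : R := 1 + / sinh 1 ^ 2 + / (2 * cosh 1 * sinh 1).

Lemma growth_const_pos : 0 < growth_const.
Proof.
  unfold growth_const. pose proof sinh1_pos. pose proof (cosh_ge1 1).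
  assert (0 < / sinh 1 ^ 2) by (apply Rinv_0_lt_compat; nra).
  assert (0 < / (2 * cosh 1 * sinh 1)) by (apply Rinv_0_lt_compat; nra). lra.
Qed.

(* In the frames of [geodesic_frame], [chdist (c1 s) (c2 s)] is a quadratic form in
   [(cosh s, sinh s)]; its values at [-1, 0, 1] bound its three coefficients. *)
Lemma geodesics_chdist_growth c1 c2 eta : isGeodesic c1 -> isGeodesic c2 ->
  (forall s, -1 <= s <= 1 -> chdist (c1 s) (c2 s) <= 1 + eta) ->
  forall s, chdist (c1 s) (c2 s) <= 1 + eta * growth_const * cosh s ^ 2.
Proof.
  intros G1 G2 Hclose s.
  destruct (geodesic_frame c1 G1) as [P1 [Q1 F1]]. destruct (geodesic_frame c2 G2) as [P2 [Q2 F2]].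
  set (a := mink P1 P2). set (b := mink P1 P2 + mink Q1 Q2). set (m := mink P1 Q2 + mink Q1 P2).
  assert (Hf : forall t, chdist (c1 t) (c2 t) = a + sinh t ^ 2 * b + cosh t * sinh t * m).
  { intro t. rewrite chdist_mink, F1, F2 by (apply geodesic_inD; auto).
    transitivity (a * (cosh t ^ 2 - sinh t ^ 2) + sinh t ^ 2 * b + cosh t * sinh t * m).
    - unfold b, a, m, mink, vlin; cbn [x0 x1 x2]. ring.
    - rewrite cosh_sinh_sqr. ring. }
  assert (Hge : forall t, 1 <= chdist (c1 t) (c2 t))
    by (intro; apply chdist_ge1; apply geodesic_inD; auto).
  pose proof (Hclose 0 ltac:(lra)) as H0. pose proof (Hclose 1 ltac:(lra)) as H1.
  pose proof (Hclose (-1) ltac:(lra)) as Hm1.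
  pose proof (Hge 0) as L0. pose proof (Hge 1) as L1. pose proof (Hge (-1)) as Lm1.
  rewrite Hf in H0, H1, Hm1, L0, L1, Lm1. rewrite Hf.
  rewrite cosh_0, sinh_0 in H0, L0.
  replace (-1) with (- (1)) in Hm1, Lm1 by ring. rewrite cosh_neg, sinh_neg in Hm1, Lm1.
  pose proof sinh1_pos as HS. pose proof (cosh_ge1 1) as HC.
  set (C1 := cosh 1) in *. set (S1 := sinh 1) in *.
  assert (Hb : b <= eta / S1 ^ 2).
  { apply Rle_div_r; nra. }
  assert (Hm : Rabs m <= eta / (2 * C1 * S1)).
  { apply Rle_div_r; [nra|]. unfold Rabs; destruct (Rcase_abs m); nra. }
  pose proof (cosh_ge1 s). pose proof (cosh_sinh_sqr s). pose proof (Rabs_sinh_le_cosh s).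
  assert (sinh s ^ 2 * b <= cosh s ^ 2 * (eta / S1 ^ 2))
    by (apply Rle_trans with (sinh s ^ 2 * (eta / S1 ^ 2)); [apply Rmult_le_compat_l; [nra | lra]|
        apply Rmult_le_compat_r; [apply Rdiv_le_0_compat; nra | nra]]).
  assert (cosh s * sinh s * m <= cosh s ^ 2 * (eta / (2 * C1 * S1))).
  { apply Rle_trans with (Rabs (cosh s * sinh s * m)); [apply Rle_abs|].
    rewrite !Rabs_mult, (Rabs_pos_eq (cosh s)) by lra.
    replace (cosh s ^ 2 * _) with (cosh s * (cosh s * (eta / (2 * C1 * S1)))) by ring.
    rewrite Rmult_assoc.
    apply Rmult_le_compat_l; [lra|]. apply Rmult_le_compat; auto; apply Rabs_pos. }
  assert (eta <= eta * cosh s ^ 2) by nra.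
  unfold growth_const. fold C1 S1. unfold Rdiv in *. nra.
Qed.

Lemma geodesics_close_on_compacts V dl : 0 < dl -> exists eps, 0 < eps /\
  forall c1 c2, isGeodesic c1 -> isGeodesic c2 ->
  (forall s, -1 <= s <= 1 -> hdist (c1 s) (c2 s) < eps) ->
  forall s, Rabs s <= V -> hdist (c1 s) (c2 s) <= dl.
Proof.
  intros Hdl.
  pose proof growth_const_pos. pose proof (cosh_ge1 V).
  assert (Hcd : 1 < cosh dl) by (rewrite <- cosh_0; apply cosh_lt_nonneg; lra).
  set (eta := (cosh dl - 1) / (growth_const * cosh V ^ 2)).
  assert (HV2 : 0 < cosh V ^ 2) by (apply pow_lt; lra).
  assert (Heta : 0 < eta) by (apply Rdiv_lt_0_compat; [lra | apply Rmult_lt_0_compat; lra]).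
  exists (arcosh (1 + eta)). split.
  { replace 0 with (arcosh (cosh 0)) by (rewrite arcosh_cosh; apply Rabs_R0).
    rewrite cosh_0. apply arcosh_lt; lra. }
  intros c1 c2 G1 G2 Hclose s Hs.
  assert (Hin : forall t, inD (c1 t) /\ inD (c2 t)) by (intro; split; apply geodesic_inD; auto).
  apply hdist_le_iff; try apply Hin; [lra|].
  apply Rle_trans with (1 + eta * growth_const * cosh s ^ 2).
  - apply geodesics_chdist_growth; auto. intros t Ht.
    rewrite <- (cosh_arcosh (1 + eta)) by lra.
    apply hdist_le_iff; try apply Hin; [apply arcosh_ge0; lra|]. left. apply Hclose, Ht.
  - assert (cosh s <= cosh V) by (apply cosh_le_Rabs; pose proof (Rabs_pos s);
      rewrite (Rabs_pos_eq V); lra).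
    pose proof (cosh_pos s).
    assert (eta * growth_const * cosh s ^ 2 <= eta * growth_const * cosh V ^ 2)
      by (apply Rmult_le_compat_l; nra).
    assert (eta * growth_const * cosh V ^ 2 = cosh dl - 1) by (unfold eta; field; split; nra).
    lra.
Qed.

(** * Möbius isometries *)

Lemma su11_Cnorm2 a b : su11 a b -> Cnorm2 a - Cnorm2 b = 1.
Proof. unfold su11. rewrite !Cmod_sqr. auto. Qed.

Lemma su11_inv a b : su11 a b -> su11 (Cconj a) (- b)%C.
Proof. unfold su11. rewrite !Cmod_sqr. destruct a, b; unfold Cnorm2; simpl. intro H. nra. Qed.

Definition mob_num (a b z : C) : C := (a * z + b)%C.
Definition mob_den (a b z : C) : C := (Cconj b * z + Cconj a)%C.

Section Mobius.

Variables a b : C.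
Hypothesis Hab : su11 a b.

Lemma mob_den_num z : Cnorm2 (mob_den a b z) - Cnorm2 (mob_num a b z) = 1 - Cnorm2 z.
Proof.
  transitivity ((Cnorm2 a - Cnorm2 b) * (1 - Cnorm2 z)); [|rewrite su11_Cnorm2; auto; ring].
  unfold mob_den, mob_num, Cnorm2. destruct a as [a1 a2], b as [b1 b2], z as [z1 z2]; simpl. ring.
Qed.

Lemma mob_den_pos z : inD z -> 0 < Cnorm2 (mob_den a b z).
Proof.
  rewrite inD_Cnorm2. intros. pose proof (mob_den_num z). pose proof (Cnorm2_ge0 (mob_num a b z)). lra.
Qed.

Lemma mob_num_den_cross z w :
  (mob_num a b z * mob_den a b w - mob_num a b w * mob_den a b z)%C = (z - w)%C.
Proof.
  pose proof (su11_Cnorm2 a b Hab) as H. unfold Cnorm2 in H.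
  unfold mob_den, mob_num. destruct a as [a1 a2], b as [b1 b2], z as [z1 z2], w as [w1 w2].
  cbn [fst snd] in H. unfold Cmult, Cminus, Cplus, Copp, Cconj; cbn [fst snd]. f_equal.
  - transitivity ((a1 ^ 2 + a2 ^ 2 - (b1 ^ 2 + b2 ^ 2)) * (z1 - w1)); [ring | rewrite H; ring].
  - transitivity ((a1 ^ 2 + a2 ^ 2 - (b1 ^ 2 + b2 ^ 2)) * (z2 - w2)); [ring | rewrite H; ring].
Qed.

Lemma mob_Cnorm2 z : inD z -> Cnorm2 (mob a b z) = 1 - (1 - Cnorm2 z) / Cnorm2 (mob_den a b z).
Proof.
  intros Hz. pose proof (mob_den_pos z Hz). pose proof (mob_den_num z).
  unfold mob. fold (mob_num a b z) (mob_den a b z). rewrite Cnorm2_div by lra.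
  field_simplify_eq; lra.
Qed.

Lemma mob_inD z : inD z -> inD (mob a b z).
Proof.
  intros Hz. pose proof (mob_den_pos z Hz). rewrite inD_Cnorm2, mob_Cnorm2 by auto.
  rewrite inD_Cnorm2 in Hz.
  assert (0 < (1 - Cnorm2 z) / Cnorm2 (mob_den a b z)) by (apply Rdiv_lt_0_compat; lra). lra.
Qed.

Lemma mob_chdist z w : inD z -> inD w -> chdist (mob a b z) (mob a b w) = chdist z w.
Proof.
  intros Hz Hw. pose proof (mob_den_pos z Hz). pose proof (mob_den_pos w Hw).
  unfold chdist. rewrite !mob_Cnorm2 by auto.
  assert (Hsub : (mob a b z - mob a b w)%C =
    ((mob_num a b z * mob_den a b w - mob_num a b w * mob_den a b z) /
     (mob_den a b z * mob_den a b w))%C).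
  { unfold mob. fold (mob_num a b z) (mob_den a b z) (mob_num a b w) (mob_den a b w).
    field. split; intro E; rewrite E in *; unfold Cnorm2 in *; simpl in *; lra. }
  rewrite Hsub, mob_num_den_cross, Cnorm2_div, Cnorm2_mul by (rewrite Cnorm2_mul; nra).
  rewrite inD_Cnorm2 in Hz, Hw. field. repeat split; lra.
Qed.

Lemma mob_hdist z w : inD z -> inD w -> hdist (mob a b z) (mob a b w) = hdist z w.
Proof. intros. rewrite !hdist_chdist, mob_chdist; auto. Qed.

Lemma mob_invK z : inD z -> mob (Cconj a) (- b)%C (mob a b z) = z.
Proof.
  intros Hz. pose proof (mob_den_pos z Hz) as HD.
  pose proof (su11_Cnorm2 a b Hab) as H. unfold Cnorm2 in H.
  assert (D0 : mob_den a b z <> 0%C)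
    by (intro E; rewrite E in HD; unfold Cnorm2 in HD; simpl in HD; lra).
  assert (E1 : (Cconj a * mob_num a b z - b * mob_den a b z)%C = z).
  { unfold mob_num, mob_den. destruct a as [a1 a2], b as [b1 b2], z as [z1 z2]; cbn [fst snd] in H.
    unfold Cmult, Cminus, Cplus, Copp, Cconj; cbn [fst snd]. f_equal.
    - transitivity ((a1 ^ 2 + a2 ^ 2 - (b1 ^ 2 + b2 ^ 2)) * z1); [ring | rewrite H; ring].
    - transitivity ((a1 ^ 2 + a2 ^ 2 - (b1 ^ 2 + b2 ^ 2)) * z2); [ring | rewrite H; ring]. }
  assert (E2 : (Cconj (- b) * mob_num a b z + Cconj (Cconj a) * mob_den a b z)%C = 1%C).
  { unfold mob_num, mob_den. destruct a as [a1 a2], b as [b1 b2], z as [z1 z2]; cbn [fst snd] in H.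
    unfold Cmult, Cminus, Cplus, Copp, Cconj, RtoC; cbn [fst snd]. f_equal.
    - transitivity (a1 ^ 2 + a2 ^ 2 - (b1 ^ 2 + b2 ^ 2)); [ring | rewrite H; ring].
    - ring. }
  unfold mob at 2. fold (mob_num a b z) (mob_den a b z).
  revert E1 E2 D0. generalize (mob_num a b z) (mob_den a b z). intros N D E1 E2 D0.
  assert (T1 : (Cconj a * (N / D) + - b)%C = ((Cconj a * N - b * D) / D)%C) by (field; auto).
  assert (T2 : (Cconj (- b) * (N / D) + Cconj (Cconj a))%C =
    ((Cconj (- b) * N + Cconj (Cconj a) * D) / D)%C) by (field; auto).
  unfold mob. rewrite T1, T2, E1, E2. field. auto.
Qed.

End Mobius.

Lemma isMob_inD g z : isMob g -> inD z -> inD (g z).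
Proof. intros [a [b [Hab Hg]]] Hz. rewrite Hg by auto. apply mob_inD; auto. Qed.

Lemma isMob_hdist g z w : isMob g -> inD z -> inD w -> hdist (g z) (g w) = hdist z w.
Proof. intros [a [b [Hab Hg]]] Hz Hw. rewrite !Hg by auto. apply mob_hdist; auto. Qed.

Lemma isMob_geodesic g c t : isMob g -> isGeodesic c -> isGeodesic (fun s => g (c (t + s))).
Proof.
  intros Hg Hc. split; [intro s; apply isMob_inD, geodesic_inD; auto|].
  intros s s'. rewrite isMob_hdist, (proj2 Hc) by (auto; apply geodesic_inD, Hc). f_equal. ring.
Qed.

Lemma isMob_foot g c t y p : isMob g -> isGeodesic c -> inD y -> is_foot c y p ->
  is_foot (fun s => g (c (t + s))) (g y) (p - t).
Proof.
  intros Hg Hc Hy Hp s. rewrite !isMob_hdist by (auto; apply geodesic_inD, Hc).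
  replace (t + (p - t)) with p by ring. apply Hp.
Qed.

Lemma diam_inD s : inD (diam s).
Proof.
  apply inD_Cnorm2. unfold diam. rewrite Cnorm2_RtoC. pose proof (exp_pos s).
  assert (-1 < (exp s - 1) / (exp s + 1) < 1) by (split; [apply Rlt_div_r | apply Rlt_div_l]; lra).
  nra.
Qed.

Lemma diam_chdist s t : chdist (diam s) (diam t) = cosh (s - t).
Proof.
  unfold chdist, diam. rewrite cosh_minus. unfold cosh, sinh. rewrite !exp_Ropp.
  unfold Cnorm2, Cminus, Cplus, Copp, RtoC; cbn [fst snd].
  pose proof (exp_pos s). pose proof (exp_pos t). field. lra.
Qed.

Definition circle_pt (k : R) : C := ((1 - k ^ 2) / (1 + k ^ 2), 2 * k / (1 + k ^ 2)).

Lemma circle_pt_Cnorm2 k : Cnorm2 (circle_pt k) = 1.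
Proof. unfold circle_pt, Cnorm2; simpl. pose proof (pow2_ge_0 k). field. lra. Qed.

Lemma rotate_Cnorm2 w z : Cnorm2 w = 1 -> Cnorm2 (w * z)%C = Cnorm2 z.
Proof. intro H. rewrite Cnorm2_mul, H. ring. Qed.

Lemma rotate_chdist w z z' : Cnorm2 w = 1 -> chdist (w * z)%C (w * z')%C = chdist z z'.
Proof.
  intro H. unfold chdist. rewrite !rotate_Cnorm2 by auto.
  replace (w * z - w * z')%C with (w * (z - z'))%C by ring. rewrite rotate_Cnorm2 by auto. reflexivity.
Qed.

Lemma rotated_diam_inD k s : inD (circle_pt k * diam s)%C.
Proof.
  pose proof (diam_inD s). rewrite inD_Cnorm2 in *.
  rewrite rotate_Cnorm2 by apply circle_pt_Cnorm2. auto.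
Qed.

Lemma chdist_rotated_diam u w s : inD u -> Cnorm2 w = 1 ->
  chdist u (w * diam s)%C = (1 + Cnorm2 u) / (1 - Cnorm2 u) * cosh s
     - (2 * (fst u * fst w + snd u * snd w) / (1 - Cnorm2 u)) * sinh s.
Proof.
  rewrite inD_Cnorm2. intros Hu Hw. unfold chdist. rewrite rotate_Cnorm2 by auto.
  unfold diam. rewrite Cnorm2_RtoC. unfold cosh, sinh. rewrite !exp_Ropp. pose proof (exp_pos s).
  set (E := exp s) in *. set (r := (E - 1) / (E + 1)).
  assert (Hr : 1 - r ^ 2 = 4 * E / (E + 1) ^ 2) by (unfold r; field; lra).
  assert (Hn : Cnorm2 (u - w * RtoC r)%C =
    Cnorm2 u - 2 * r * (fst u * fst w + snd u * snd w) + r ^ 2 * Cnorm2 w)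
    by (unfold Cnorm2; destruct u, w; simpl; ring).
  rewrite Hn, Hr, Hw. unfold r. field. lra.
Qed.

(** The Möbius map [z |-> (z + x) / (conj x z + 1)], normalised in SU(1,1); it sends 0 to [x]. *)
Definition transl_a (x : C) : C := RtoC (/ sqrt (1 - Cnorm2 x)).
Definition transl_b (x : C) : C := (fst x / sqrt (1 - Cnorm2 x), snd x / sqrt (1 - Cnorm2 x)).

Section Through_point.

Variable x : C.
Hypothesis Hx : inD x.

Lemma transl_sqrt_pos : 0 < sqrt (1 - Cnorm2 x).
Proof. apply sqrt_lt_R0. rewrite inD_Cnorm2 in Hx. lra. Qed.

Lemma su11_transl : su11 (transl_a x) (transl_b x).
Proof.
  pose proof transl_sqrt_pos as Hq. pose proof Hx as Hx'. rewrite inD_Cnorm2 in Hx'.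
  pose proof (pow2_sqrt (1 - Cnorm2 x) ltac:(lra)) as Hs.
  unfold su11, transl_a, transl_b. rewrite !Cmod_sqr. set (q := sqrt (1 - Cnorm2 x)) in *.
  transitivity ((1 - Cnorm2 x) / q ^ 2); [unfold Cnorm2, RtoC; cbn [fst snd]; field; lra|].
  rewrite <- Hs. field. lra.
Qed.

Lemma transl_0 : mob (transl_a x) (transl_b x) 0 = x.
Proof.
  pose proof transl_sqrt_pos. unfold mob, transl_a, transl_b. destruct x as [x1 x2].
  unfold Cdiv, Cinv, Cmult, Cplus, Cconj, RtoC; simpl. f_equal; field; lra.
Qed.

Definition geod_through (k : R) (s : R) : C :=
  mob (transl_a x) (transl_b x) (circle_pt k * diam s)%C.

Lemma geod_through_geodesic k : isGeodesic (geod_through k).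
Proof.
  split.
  - intro t. apply mob_inD; [apply su11_transl | apply rotated_diam_inD].
  - intros s t. unfold geod_through.
    rewrite mob_hdist by (apply su11_transl || apply rotated_diam_inD).
    rewrite hdist_chdist, rotate_chdist, diam_chdist, arcosh_cosh by apply circle_pt_Cnorm2.
    reflexivity.
Qed.

Lemma geod_through_0 k : geod_through k 0 = x.
Proof.
  unfold geod_through. rewrite <- transl_0 at 3. f_equal.
  unfold diam. rewrite exp_0. unfold circle_pt, RtoC, Cmult; simpl.
  pose proof (pow2_ge_0 k). f_equal; field; lra.
Qed.

Lemma chdist_geod_through k y s : inD y ->
  chdist y (geod_through k s) =
  chdist (mob (Cconj (transl_a x)) (- transl_b x) y) (circle_pt k * diam s)%C.
Proof.
  intros Hy. pose proof su11_transl as HT.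
  unfold geod_through. rewrite <- (mob_chdist _ _ (su11_inv _ _ HT)), mob_invK;
    auto using rotated_diam_inD, mob_inD.
Qed.

End Through_point.

(** * Directions avoiding a given foot *)

Lemma cosh_sinh_comb_eq a b c d : (forall s, a * cosh s + b * sinh s = c * cosh s + d * sinh s) ->
  a = c /\ b = d.
Proof.
  intro H. pose proof (H 0) as H0. rewrite cosh_0, sinh_0 in H0.
  assert (a = c) by lra. subst. split; auto.
  pose proof (H 1) as H1. pose proof sinh1_pos. apply Rmult_eq_reg_r with (sinh 1); lra.
Qed.

Lemma linear_eventually_nonzero a1 a0 : a1 <> 0 \/ a0 <> 0 ->
  exists M, forall k, M < k -> a1 * k + a0 <> 0.
Proof.
  intro H. destruct (Req_dec a1 0) as [-> | H1].
  - exists 0. intros k _. destruct H as [H|H]; [contradiction|]. rewrite Rmult_0_l, Rplus_0_l. auto.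
  - exists (- a0 / a1). intros k Hk E. assert (k = - a0 / a1) by (field_simplify_eq; lra). lra.
Qed.

Lemma quadratic_eventually_nonzero a2 a1 a0 : a2 <> 0 \/ a1 <> 0 \/ a0 <> 0 ->
  exists M, forall k, M < k -> a2 * k ^ 2 + a1 * k + a0 <> 0.
Proof.
  intro H. destruct (Req_dec a2 0) as [-> | H2].
  - destruct (linear_eventually_nonzero a1 a0) as [M HM]; [tauto|].
    exists M. intros k Hk. rewrite Rmult_0_l, Rplus_0_l. auto.
  - set (p := a1 / a2). set (q := a0 / a2).
    exists (1 + Rabs p + Rabs q). intros k Hk E.
    assert (Hpq : k ^ 2 + p * k + q = 0) by (unfold p, q; field_simplify_eq; [lra | auto]).
    pose proof (Rle_abs (- p)). pose proof (Rle_abs (- q)). rewrite Rabs_Ropp in *.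
    pose proof (Rabs_pos p). pose proof (Rabs_pos q). nra.
Qed.

Definition centering_poly (u : C) (v k : R) : R :=
  (- 2 * fst u * cosh v - (1 + Cnorm2 u) * sinh v) * k ^ 2 + 4 * snd u * cosh v * k
  + (2 * fst u * cosh v - (1 + Cnorm2 u) * sinh v).

(* Comparing the coefficients of [cosh s] and [sinh s] in [chdist_rotated_diam] with those of
   [A cosh (s - v)] eliminates [A] and leaves a quadratic equation in [k]. *)
Lemma rotated_profile_centering_root u v k A : inD u ->
  (forall s, chdist u (circle_pt k * diam s)%C = A * cosh (s - v)) -> centering_poly u v k = 0.
Proof.
  intros Hu H.
  destruct (cosh_sinh_comb_eq ((1 + Cnorm2 u) / (1 - Cnorm2 u))
    (- (2 * (fst u * fst (circle_pt k) + snd u * snd (circle_pt k)) / (1 - Cnorm2 u)))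
    (A * cosh v) (- (A * sinh v))) as [Hc Hs].
  { intro s. pose proof (H s) as Hs.
    rewrite chdist_rotated_diam, cosh_minus in Hs by (auto; apply circle_pt_Cnorm2). lra. }
  rewrite inD_Cnorm2 in Hu. pose proof (pow2_ge_0 k).
  assert (Hk : 2 * (fst u * (1 - k ^ 2) + snd u * (2 * k)) * cosh v =
    (1 + Cnorm2 u) * (1 + k ^ 2) * sinh v).
  { unfold circle_pt in Hs; cbn [fst snd] in Hs.
    apply Rmult_eq_reg_r with (/ ((1 - Cnorm2 u) * (1 + k ^ 2))); [|apply Rinv_neq_0_compat; nra].
    apply Ropp_eq_compat in Hs. rewrite !Ropp_involutive in Hs.
    transitivity (A * sinh v * cosh v).
    - rewrite <- Hs. field. lra.
    - replace (A * sinh v * cosh v) with (A * cosh v * sinh v) by ring. rewrite <- Hc. field. lra. }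
  unfold centering_poly. lra.
Qed.

Lemma centering_poly_eventually_nonzero u v : v <> 0 ->
  exists M, forall k, M < k -> centering_poly u v k <> 0.
Proof.
  intro Hv. apply quadratic_eventually_nonzero.
  destruct (Req_dec (- 2 * fst u * cosh v - (1 + Cnorm2 u) * sinh v) 0) as [E|E]; [|auto].
  right; right. intro E'. pose proof (sinh_neq0 v Hv). pose proof (Cnorm2_ge0 u).
  assert ((1 + Cnorm2 u) * sinh v = 0) by lra.
  apply Rmult_integral in H1. destruct H1; lra.
Qed.

(* Each orbit point constrains the direction [k] through a nonzero quadratic, so all large
   directions avoid every one of finitely many constraints. *)
Lemma geod_through_avoids_centers x v (Ys : list C) : inD x -> v <> 0 ->
  exists k, forall y, In y Ys -> inD y -> ~ profile_centered (geod_through x k) y v.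
Proof.
  intros Hx Hv.
  assert (HM : exists M, forall y, In y Ys -> inD y -> forall k, M < k ->
    ~ profile_centered (geod_through x k) y v).
  { induction Ys as [|y Ys [M1 H1]]; [exists 0; intros y []|].
    set (u := mob (Cconj (transl_a x)) (- transl_b x) y).
    destruct (centering_poly_eventually_nonzero u v Hv) as [M2 H2].
    exists (Rmax M1 M2). intros y' [<- | Hin] Hy k Hk.
    - intros [A [_ HA]]. apply (H2 k); [pose proof (Rmax_r M1 M2); lra|].
      apply (rotated_profile_centering_root u v k A).
      + apply mob_inD; auto. apply su11_inv, su11_transl, Hx.
      + intro s. unfold u. rewrite <- chdist_geod_through; auto.
    - apply H1; auto. pose proof (Rmax_l M1 M2); lra. }
  destruct HM as [M HM]. exists (M + 1). intros y Hin Hy. apply HM; auto. lra.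
Qed.

(** * Foot margins *)

Definition foot_margin (c : R -> C) (v : R) (y : C) (g m : R) : Prop :=
  forall s, Rabs (s - v) <= g -> exists q, v - 1 <= q <= v + 1 /\ hdist y (c q) + m <= hdist y (c s).

Lemma foot_margin_mono c v y g m g' m' :
  foot_margin c v y g m -> g' <= g -> m' <= m -> foot_margin c v y g' m'.
Proof.
  intros H Hg Hm s Hs. destruct (H s ltac:(lra)) as [q [Hq1 Hq2]]. exists q. split; auto. lra.
Qed.

Lemma nearest_in_interval v p :
  exists q, v - 1 <= q <= v + 1 /\ Rabs (q - p) <= Rmax 0 (Rabs (v - p) - 1).
Proof.
  destruct (Rle_lt_dec (Rabs (v - p)) 1) as [Hd|Hd].
  - exists p. rewrite Rminus_diag, Rabs_R0. split; [|apply Rmax_l].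
    apply Rabs_le_between' in Hd. lra.
  - rewrite Rmax_right by lra. destruct (Rcase_abs (v - p)) as [Hvp|Hvp].
    + rewrite (Rabs_left (v - p)) in * by lra.
      exists (v + 1). rewrite Rabs_left by lra. split; lra.
    + rewrite (Rabs_pos_eq (v - p)) in * by lra.
      exists (v - 1). rewrite Rabs_pos_eq by lra. split; lra.
Qed.

(* With the profile centred at [p <> v], points within [g] of [v] stay at distance [a] from [p],
   while some point of [v-1, v+1] lies within [b < a] of [p]. *)
Lemma foot_margin_off_center c v y : isGeodesic c -> inD y -> ~ profile_centered c y v ->
  exists g m, 0 < g <= 1 /\ 0 < m /\ foot_margin c v y g m.
Proof.
  intros Hc Hy Hv.
  destruct (geodesic_profile c y Hc Hy) as [p Hp].
  assert (Hpv : p <> v) by (intro E; subst; contradiction).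
  destruct Hp as [A [HA Hp]].
  set (d := Rabs (v - p)). assert (Hd : 0 < d) by (apply Rabs_pos_lt; lra).
  set (g := Rmin (d / 2) (1 / 2)).
  assert (Hg : 0 < g <= 1 / 2) by (split; [apply Rmin_pos | apply Rmin_r]; lra).
  assert (Hgd : g <= d / 2) by apply Rmin_l.
  set (a := d - g). set (b := Rmax 0 (d - 1)).
  assert (Hab : 0 <= b < a) by (split; [apply Rmax_l | apply Rmax_lub_lt]; unfold a; lra).
  destruct (nearest_in_interval v p) as [q [Hq Hqp]].
  assert (Hmono : forall r r', 0 <= r <= r' -> arcosh (A * cosh r) <= arcosh (A * cosh r')).
  { intros r r' Hr. pose proof (cosh_ge1 r). apply arcosh_le; [nra|].
    apply Rmult_le_compat_l; [lra|]. apply cosh_le_Rabs. rewrite !Rabs_pos_eq; lra. }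
  exists g, (arcosh (A * cosh a) - arcosh (A * cosh b)). repeat split; try lra.
  - pose proof (cosh_ge1 b). pose proof (cosh_lt_nonneg b a (proj1 Hab) (proj2 Hab)).
    pose proof (arcosh_lt (A * cosh b) (A * cosh a) ltac:(nra) ltac:(nra)). lra.
  - intros s Hs. exists q. split; auto.
    rewrite !hdist_chdist, !Hp, <- (cosh_Rabs (q - p)), <- (cosh_Rabs (s - p)).
    assert (a <= Rabs (s - p)).
    { pose proof (Rabs_triang (v - s) (s - p)) as Tr.
      replace (v - s + (s - p)) with (v - p) in Tr by ring.
      rewrite Rabs_minus_sym in Hs. unfold a, d. lra. }
    pose proof (Hmono (Rabs (q - p)) b ltac:(split; [apply Rabs_pos | auto])).
    pose proof (Hmono a (Rabs (s - p)) ltac:(lra)). lra.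
Qed.

Lemma foot_margins_off_centers c v (Ys : list C) : isGeodesic c ->
  (forall y, In y Ys -> inD y -> ~ profile_centered c y v) ->
  exists g m, 0 < g <= 1 /\ 0 < m /\ forall y, In y Ys -> inD y -> foot_margin c v y g m.
Proof.
  intros Hc. induction Ys as [|y Ys IH]; intro H.
  - exists 1, 1. repeat split; try lra. intros y [].
  - destruct IH as [g1 [m1 [G1 [M1 H1]]]]; [intros; apply H; simpl; auto|].
    destruct (classic (inD y)) as [Hy|Hy].
    + destruct (foot_margin_off_center c v y Hc Hy (H y (or_introl eq_refl) Hy))
        as [g2 [m2 [G2 [M2 H2]]]].
      exists (Rmin g1 g2), (Rmin m1 m2).
      pose proof (Rmin_l g1 g2). pose proof (Rmin_r g1 g2).
      pose proof (Rmin_l m1 m2). pose proof (Rmin_r m1 m2).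
      repeat split; try (apply Rmin_pos; lra); try lra.
      intros y' [<- | Hin] Hy'; eapply foot_margin_mono; eauto.
    + exists g1, m1. repeat split; auto; try lra. intros y' [<- | Hin] Hy'; [contradiction | auto].
Qed.

(* Moving the geodesic by at most [dl] changes each distance by at most [dl]; with [2 dl < m]
   the margin survives, so no point near [v] can be a foot on the perturbed geodesic. *)
Lemma foot_margin_stable c l v y g m dl s : isGeodesic c -> isGeodesic l -> inD y ->
  foot_margin c v y g m -> g <= 1 -> 2 * dl < m ->
  (forall q, v - 1 <= q <= v + 1 -> hdist (l q) (c q) <= dl) ->
  Rabs (s - v) <= g -> ~ is_foot l y s.
Proof.
  intros Hc Hl Hy Hm Hg Hdl Hclose Hs Hfoot.
  destruct (Hm s Hs) as [q [Hq Hqs]]. apply Rabs_le_between' in Hs.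
  assert (Hin : forall t, inD (c t) /\ inD (l t)) by (intro; split; apply geodesic_inD; auto).
  pose proof (hdist_triangle y (l s) (c s) Hy (proj2 (Hin s)) (proj1 (Hin s))).
  pose proof (hdist_triangle y (c q) (l q) Hy (proj1 (Hin q)) (proj2 (Hin q))).
  pose proof (Hclose s ltac:(lra)). pose proof (Hclose q Hq). rewrite hdist_sym in H2.
  pose proof (Hfoot q). lra.
Qed.

Lemma geodesic_with_foot_margins x v (Ys : list C) : inD x -> v <> 0 ->
  exists c g m, isGeodesic c /\ c 0 = x /\ 0 < g <= 1 /\ 0 < m <= 1 /\
    forall y, In y Ys -> inD y -> foot_margin c v y g m.
Proof.
  intros Hx Hv. destruct (geod_through_avoids_centers x v Ys Hx Hv) as [k Hk].
  destruct (foot_margins_off_centers (geod_through x k) v Ys (geod_through_geodesic x Hx k) Hk)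
    as [g [m [Hg [Hm Hgm]]]].
  exists (geod_through x k), g, (Rmin m 1).
  pose proof (Rmin_l m 1). pose proof (Rmin_r m 1).
  split; [apply geod_through_geodesic, Hx|]. split; [apply geod_through_0, Hx|].
  split; [auto|]. split; [split; [apply Rmin_pos|]; lra|].
  intros y Hin Hy. apply foot_margin_mono with g m; auto; lra.
Qed.

(** * Orbits and the set S^+ *)

Lemma inD_0 : inD 0.
Proof. apply inD_Cnorm2. rewrite Cnorm2_RtoC. lra. Qed.

Lemma Cnorm2_le_of_hdist0 y r : inD y -> hdist 0 y <= r -> Cnorm2 y <= (cosh r - 1) / (cosh r + 1).
Proof.
  intros Hy H. pose proof (hdist_ge0 0 y inD_0 Hy).
  apply hdist_le_iff in H; [|apply inD_0 | auto | lra].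
  rewrite inD_Cnorm2 in Hy. pose proof (cosh_ge1 r). pose proof (Cnorm2_ge0 y).
  unfold chdist in H. rewrite Cnorm2_RtoC, Cnorm2_sub_sym in H.
  replace (Cnorm2 (y - 0)%C) with (Cnorm2 y) in H by (unfold Cnorm2; simpl; ring).
  replace (1 + 2 * Cnorm2 y / ((1 - 0 ^ 2) * (1 - Cnorm2 y))) with ((1 + Cnorm2 y) / (1 - Cnorm2 y)) in H
    by (field; lra).
  apply (Rle_div_l (1 + Cnorm2 y) (cosh r) (1 - Cnorm2 y)) in H; [|lra].
  apply Rle_div_r; [lra|]. nra.
Qed.

Lemma orbit_near_finite Gamma x r : fuchsian Gamma -> inD x ->
  exists Ys : list C, forall g, Gamma g -> hdist x (g x) <= r -> In (g x) Ys.
Proof.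
  intros [Hmob [_ [_ [_ Hdisc]]]] Hx.
  set (K := cosh (hdist 0 x + r)). pose proof (cosh_ge1 (hdist 0 x + r)) as HK. fold K in HK.
  set (rr := sqrt (Rmax ((K - 1) / (K + 1)) (Cnorm2 x))).
  assert (Hrr : 0 <= rr < 1).
  { assert (Hm : Rmax ((K - 1) / (K + 1)) (Cnorm2 x) < 1)
      by (apply Rmax_lub_lt; [apply (Rlt_div_l (K - 1) 1 (K + 1)); lra | apply inD_Cnorm2, Hx]).
    assert (Hm0 : 0 <= Rmax ((K - 1) / (K + 1)) (Cnorm2 x))
      by (apply Rle_trans with (Cnorm2 x); [apply Cnorm2_ge0 | apply Rmax_r]).
    pose proof (sqrt_lt_1_alt _ 1 (conj Hm0 Hm)) as Hs. rewrite sqrt_1 in Hs.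
    split; [apply sqrt_pos | exact Hs]. }
  destruct (Hdisc rr Hrr) as [l Hl].
  exists (map (fun h : C -> C => h x) l). intros g Hg Hd.
  assert (Hgx : inD (g x)) by (apply isMob_inD; auto).
  destruct (Hl g Hg) as [h [Hh1 Hh2]].
  { exists x. unfold Cmod. fold (Cnorm2 x) (Cnorm2 (g x)). split; apply sqrt_le_1_alt.
    - apply Rmax_r.
    - apply Rle_trans with ((K - 1) / (K + 1)); [|apply Rmax_l].
      apply Cnorm2_le_of_hdist0; auto.
      pose proof (hdist_triangle 0 x (g x) inD_0 Hx Hgx). lra. }
  rewrite <- Hh2 by auto. apply (in_map (fun h0 : C -> C => h0 x)). auto.
Qed.

Lemma Splus_foot_within Gamma kappa rho x s : Splus Gamma kappa rho x s ->
  exists h, Gamma h /\ hdist (h x) (kappa s) <= rho /\ is_foot kappa (h x) s.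
Proof.
  intros [h [Hh [[_ HN] Hfoot]]]. exists h. repeat split; auto.
  destruct HN as [[t0 Ht0] | [_ [_ [t0 Ht0]]]]; pose proof (Hfoot t0); lra.
Qed.

Lemma Splus_near Gamma kappa rho x gi t : Gamma gi -> isMob gi -> isGeodesic kappa -> inD x ->
  hdist (gi x) (kappa t) < rho ->
  exists p, Splus Gamma kappa rho x p /\ Rabs (t - p) <= hdist (gi x) (kappa t).
Proof.
  intros Hgi Hmob Hk Hx Hd. assert (Hz : inD (gi x)) by (apply isMob_inD; auto).
  destruct (geodesic_profile kappa (gi x) Hk Hz) as [p Hp].
  exists p. split; [|apply profile_centered_near; auto].
  exists gi. split; auto. split; [split; auto; left; exists t; auto|].
  apply profile_centered_foot, Hp.
Qed.

(* The orbit point [g x] near [kappa t] has a foot [p] in [S^+]; periodicity puts [p + v] in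
   [S^+], whose witness [h x] is carried by [g] to an orbit point with foot near [v] on the
   translated geodesic. *)
Lemma Splus_periodic_orbit_foot Gamma kappa rho x v g t : fuchsian Gamma -> isGeodesic kappa ->
  inD x -> Gamma g -> (forall u, Splus Gamma kappa rho x (u + v) <-> Splus Gamma kappa rho x u) ->
  hdist x (g (kappa t)) < rho ->
  exists k s, Gamma k /\ Rabs (s - v) <= hdist x (g (kappa t)) /\
    hdist (k x) (g (kappa (t + s))) <= rho /\ is_foot (fun s => g (kappa (t + s))) (k x) s.
Proof.
  intros [Hmob [_ [Hcomp [Hinv _]]]] Hk Hx Hg Hper Hd.
  destruct (Hinv g Hg) as [gi [Hgi Hgi']].
  assert (Hgit : hdist (gi x) (kappa t) = hdist x (g (kappa t))).
  { rewrite <- (Hgi' (kappa t)) at 1 by apply geodesic_inD, Hk.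
    apply isMob_hdist; auto. apply isMob_inD; auto. apply geodesic_inD, Hk. }
  destruct (Splus_near Gamma kappa rho x gi t Hgi (Hmob gi Hgi) Hk Hx) as [p [HSp Hpt]]; [lra|].
  apply Hper in HSp. destruct (Splus_foot_within _ _ _ _ _ HSp) as [h [Hh [Hhd Hhf]]].
  destruct (Hcomp g h Hg Hh) as [k [Hk' Hkgh]].
  assert (Hhx : inD (h x)) by (apply isMob_inD; auto).
  exists k, (p + v - t). rewrite !Hkgh by auto. repeat split; auto.
  - rewrite Rabs_minus_sym. replace (v - (p + v - t)) with (t - p) by ring. lra.
  - rewrite isMob_hdist by (auto; apply geodesic_inD, Hk).
    replace (t + (p + v - t)) with (p + v) by ring. auto.
  - replace (p + v - t) with ((p + v) - t) by ring. apply isMob_foot; auto.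
Qed.

Lemma interiorD_in (tau : C -> Prop) z : interiorD tau z -> tau z.
Proof. intros [e [He H]]. apply H. replace (z - z)%C with (RtoC 0) by ring. rewrite Cmod_0. auto. Qed.

Lemma hdist_via_geodesics c l s y : isGeodesic c -> isGeodesic l -> inD y ->
  hdist (c 0) y <= Rabs s + hdist (c s) (l s) + hdist (l s) y.
Proof.
  intros Hc Hl Hy. assert (Hin : forall t, inD (c t) /\ inD (l t)) by (split; apply geodesic_inD; auto).
  pose proof (hdist_triangle (c 0) (c s) y (proj1 (Hin 0)) (proj1 (Hin s)) Hy).
  pose proof (hdist_triangle (c s) (l s) y (proj1 (Hin s)) (proj2 (Hin s)) Hy).
  rewrite (proj2 Hc), Rminus_0_l, Rabs_Ropp in *. lra.
Qed.

Lemma dense_orbit_shadows Gamma kappa c v dl r : fuchsian Gamma -> isGeodesic kappa ->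
  dense_orbit Gamma kappa -> isGeodesic c -> 0 < dl -> 0 < r ->
  exists g t, Gamma g /\ hdist (c 0) (g (kappa t)) < r /\
    forall q, v - 1 <= q <= v + 1 -> hdist (g (kappa (t + q))) (c q) <= dl.
Proof.
  intros HF Hk Hdense Hc Hdl Hr.
  destruct (geodesics_close_on_compacts (Rabs v + 1) dl Hdl) as [eps [Heps Hclose]].
  destruct (Hdense c Hc (Rmin eps r)) as [t [g [Hg Happ]]]; [apply Rmin_pos; lra|].
  pose proof (Rmin_l eps r). pose proof (Rmin_r eps r).
  exists g, t. split; [auto | split].
  - pose proof (Happ 0 ltac:(lra)) as Ht. rewrite Rplus_0_r, hdist_sym in Ht. lra.
  - intros q Hq. apply (Hclose (fun s => g (kappa (t + s))) c); auto.
    + apply isMob_geodesic; auto. apply HF, Hg.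
    + intros s Hs. pose proof (Happ s Hs). lra.
    + apply Rabs_le. pose proof (Rle_abs v). pose proof (Rle_abs (- v)). rewrite Rabs_Ropp in *. lra.
Qed.

Theorem lemma3p4 (Gamma : (C -> C) -> Prop) (tau : C -> Prop) (kappa : R -> C)
  (x : C) (rho : R) :
  fuchsian Gamma -> cocompact Gamma ->
  hyperbolic_polygon tau -> fundamental_domain Gamma tau ->
  side_pairings_not_involutions Gamma tau ->
  isGeodesic kappa -> dense_orbit Gamma kappa ->
  interiorD tau x -> (0 < rho)%R ->
  every_geodesic_meets_ball Gamma x rho ->
  aperiodic (Splus Gamma kappa rho x).
Proof.
  intros HF _ _ HFD _ Hk Hdense Hxi Hrho _ v Hv Hper.
  assert (Hx : inD x) by (apply (proj1 HFD), interiorD_in, Hxi).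
  destruct (orbit_near_finite Gamma x (rho + Rabs v + 2) HF Hx) as [Ys HYs].
  destruct (geodesic_with_foot_margins x v Ys Hx Hv) as [c [gm [m [Hc [Hc0 [Hgm [Hm Hmarg]]]]]]].
  destruct (dense_orbit_shadows Gamma kappa c v (m / 3) (Rmin gm rho)) as [g [t [Hg [Hgt Hlc]]]];
    auto; try apply Rmin_pos; try lra.
  pose proof (Rmin_l gm rho). pose proof (Rmin_r gm rho). rewrite Hc0 in Hgt.
  destruct (Splus_periodic_orbit_foot Gamma kappa rho x v g t HF Hk Hx Hg Hper)
    as [k [s [Hk' [Hsv [Hks Hfoot]]]]]; [lra|].
  assert (Hl : isGeodesic (fun s => g (kappa (t + s)))) by (apply isMob_geodesic; auto; apply HF, Hg).
  assert (Hkx : inD (k x)) by (apply isMob_inD; auto; apply HF, Hk').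
  assert (Hs : v - 1 <= s <= v + 1) by (apply Rabs_le_between'; lra).
  apply (foot_margin_stable c (fun s => g (kappa (t + s))) v (k x) gm m (m / 3) s); auto; try lra.
  apply Hmarg; auto. apply HYs; auto.
  pose proof (hdist_via_geodesics c _ s (k x) Hc Hl Hkx) as Hd. cbv beta in Hd.
  rewrite Hc0, (hdist_sym (g _)), (hdist_sym (c s)) in Hd.
  pose proof (Hlc s Hs). pose proof (Rabs_triang (s - v) v). replace (s - v + v) with s in * by ring.
  lra.
Qed.
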